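(* Let $v\in\mathbb{R}$ and consider the system of ODEs for $(a,r,s)(\xi)\in\mathbb{R}^3$: $$\partial_\xi a=r,\qquad \partial_\xi r=-vr-\frac{sa}{2}+\frac{a|r|}{2},\qquad \partial_\xi s=-vs-ra.$$ Then each of the sets $I_1=\{r>0,\ s=2r\}$, $I_2=\{r>0,\ s=-r\}$, $I_3=\{r<0,\ s=r\}$, $I_4=\{r<0,\ s=-2r\}$ is invariant under the flow of this system, and so is each of the regions $R_1=\{s\ge-2r,\ s\ge 2r\}$, $R_2=\{s\le 2r,\ s\ge -r\}$, $R_3=\{s\le -r,\ s\le r\}$, $R_4=\{s\ge r,\ s\le-2r\}$.
   Context: Invariant means: any solution passing through a point of the set stays in the set for all $\xi$ in its interval of existence. The right-hand side of the system is locally Lipschitz, so solutions exist and are unique. *)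

From Stdlib Require Import Reals.
From Coquelicot Require Import Coquelicot.
Open Scope R_scope.

Definition in_interval (lo hi : Rbar) (x : R) : Prop :=
  Rbar_lt lo x /\ Rbar_lt x hi.

Definition is_solution (v : R) (lo hi : Rbar) (a r s : R -> R) : Prop :=
  forall x, in_interval lo hi x ->
    is_derive a x (r x) /\
    is_derive r x (- v * r x - s x * a x / 2 + a x * Rabs (r x) / 2) /\
    is_derive s x (- v * s x - r x * a x).

Definition invariant (v : R) (S : R -> R -> R -> Prop) : Prop :=
  forall (lo hi : Rbar) (a r s : R -> R),
    is_solution v lo hi a r s ->
    forall x0, in_interval lo hi x0 -> S (a x0) (r x0) (s x0) ->
    forall x, in_interval lo hi x -> S (a x) (r x) (s x).

Definition Iset1 (a r s : R) : Prop := r > 0 /\ s = 2 * r.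
Definition Iset2 (a r s : R) : Prop := r > 0 /\ s = - r.
Definition Iset3 (a r s : R) : Prop := r < 0 /\ s = r.
Definition Iset4 (a r s : R) : Prop := r < 0 /\ s = - 2 * r.

Definition Rreg1 (a r s : R) : Prop := s >= - 2 * r /\ s >= 2 * r.
Definition Rreg2 (a r s : R) : Prop := s <= 2 * r /\ s >= - r.
Definition Rreg3 (a r s : R) : Prop := s <= - r /\ s <= r.
Definition Rreg4 (a r s : R) : Prop := s >= r /\ s <= - 2 * r.

From Stdlib Require Import Reals Lra Psatz.
From Coquelicot Require Import Coquelicot.
Open Scope R_scope.

(* The slopes 2 and -1 are the roots of k^2 = k + 2, which is exactly the
   condition for the half-line {r >= 0, s = k r} to be invariant.  Along a
   solution the energy E = (s - k r)^2 + min(r, 0)^2 satisfies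
   |E'| <= (2|v| + 6|a|) E, so by Gronwall E stays 0 once it vanishes; on the
   half-line r' = r (a (1 - k) / 2 - v), so r cannot reach 0 from r > 0 either.
   The system is symmetric under (a, r, s) -> (-a, -r, s), which turns I_1, I_2
   into I_4, I_3 and R_2 into R_4.  Each remaining region is a wedge whose two
   edges are invariant half-lines lying in the region: a solution leaving the
   wedge would cross an edge, and then stay on that edge, inside the wedge. *)

Lemma in_interval_between lo hi x y t :
  in_interval lo hi x -> in_interval lo hi y -> x <= t <= y -> in_interval lo hi t.
Proof.
  unfold in_interval; intros [Hlo _] [_ Hhi] Ht.
  destruct lo, hi; simpl in *; intuition lra.
Qed.

Lemma is_derive_continuity_pt (f : R -> R) x l : is_derive f x l -> continuity_pt f x.
Proof.
  intros Hf. apply continuity_pt_filterlim, (ex_derive_continuous f). now exists l.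
Qed.

Lemma continuity_pt_Rmin (f g : R -> R) x :
  continuity_pt f x -> continuity_pt g x -> continuity_pt (fun t => Rmin (f t) (g t)) x.
Proof.
  intros Hf%continuity_pt_filterlim Hg%continuity_pt_filterlim.
  apply continuity_pt_filterlim.
  change (continuous (fun t => Rmin (f t) (g t)) x).
  apply (continuous_ext (fun t => (f t + g t - Rabs (f t - g t)) / 2)).
  { intros t. change ((f t + g t - Rabs (f t - g t)) / 2 = Rmin (f t) (g t)).
    unfold Rmin. destruct Rle_dec.
    - rewrite Rabs_left1 by lra. field.
    - rewrite Rabs_pos_eq by lra. field. }
  apply (continuous_mult (fun t => f t + g t - Rabs (f t - g t)) (fun _ => / 2)).
  - apply (continuous_minus (fun t => f t + g t)).
    + now apply (continuous_plus f g).
    + apply (continuous_Rabs_comp (fun t => f t - g t)).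
      now apply (continuous_minus f g).
  - apply continuous_const.
Qed.

Lemma interval_zero_crossing (f : R -> R) lo hi x0 x :
  (forall t, in_interval lo hi t -> continuity_pt f t) ->
  in_interval lo hi x0 -> in_interval lo hi x -> 0 <= f x0 -> f x < 0 ->
  exists y, in_interval lo hi y /\ f y = 0.
Proof.
  intros Hf Hx0 Hx Hf0 Hfx.
  destruct (Req_dec (f x0) 0) as [Hz | Hnz]; [now exists x0 |].
  destruct (Rtotal_order x0 x) as [Hlt | [-> | Hgt]]; [| lra |].
  - destruct (Ranalysis5.IVT_interv (fun t => - f t) x0 x) as [y [Hy Hfy]]; try lra.
    + intros t Ht. apply continuity_pt_opp, Hf, (in_interval_between lo hi x0 x); auto.
    + exists y. split; [apply (in_interval_between lo hi x0 x) | lra]; auto.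
  - destruct (Ranalysis5.IVT_interv f x x0) as [y [Hy Hfy]]; try lra.
    + intros t Ht. apply Hf, (in_interval_between lo hi x x0); auto.
    + exists y. split; [apply (in_interval_between lo hi x x0) |]; auto.
Qed.

(* With sg the direction from x0 to x, E(t) exp (- sg M (t - x0)) is
   nonincreasing from x0 towards x. *)
Lemma gronwall_segment (E dE : R -> R) (M x0 x : R) :
  (forall t, Rmin x0 x <= t <= Rmax x0 x -> is_derive E t (dE t)) ->
  (forall t, Rmin x0 x <= t <= Rmax x0 x -> 0 <= E t) ->
  (forall t, Rmin x0 x <= t <= Rmax x0 x -> Rabs (dE t) <= M * E t) ->
  E x0 = 0 -> E x = 0.
Proof.
  intros HE Hpos Hle H0.
  set (sg := if Rle_dec x0 x then 1 else -1).
  assert (Hsg : sg * sg = 1 /\ 0 <= sg * (x - x0))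
    by (unfold sg; destruct Rle_dec; split; nra).
  set (w := fun t => exp (- sg * M * (t - x0))).
  set (dF := fun t => (dE t - sg * M * E t) * w t).
  assert (HF : forall t, Rmin x0 x <= t <= Rmax x0 x ->
            is_derive (fun u => E u * w u) t (dF t)).
  { intros t Ht.
    replace (dF t) with (dE t * w t + E t * (- sg * M * w t))
      by (unfold dF; ring).
    apply (is_derive_mult E w); [now apply HE | | apply Rmult_comm].
    unfold w. auto_derive; [exact I | unfold Rminus; ring]. }
  destruct (MVT_gen (fun u => E u * w u) x0 x dF) as [xi [Hxi Hmvt]].
  - intros t Ht. apply HF; lra.
  - intros t Ht. exact (is_derive_continuity_pt _ _ _ (HF t Ht)).
  - destruct Hsg as [Hsg2 Hdir].
    assert (Hdecr : sg * dF xi <= 0).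
    { unfold dF.
      replace (sg * ((dE xi - sg * M * E xi) * w xi))
        with ((sg * dE xi - (sg * sg) * M * E xi) * w xi) by ring.
      rewrite Hsg2.
      assert (sg * dE xi <= Rabs (dE xi))
        by (unfold sg; destruct Rle_dec;
            [pose proof (Rle_abs (dE xi)) |
             pose proof (Rle_abs (- dE xi)); rewrite Rabs_Ropp in *]; lra).
      assert (0 < w xi) by apply exp_pos.
      pose proof (Hle xi Hxi). nra. }
    assert (Hx : Rmin x0 x <= x <= Rmax x0 x)
      by (split; [apply Rmin_r | apply Rmax_r]).
    assert (0 < w x) by apply exp_pos.
    pose proof (Hpos x Hx).
    replace (dF xi * (x - x0)) with ((sg * dF xi) * (sg * (x - x0))) in Hmvt
      by (replace (sg * dF xi * (sg * (x - x0)))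
            with ((sg * sg) * (dF xi * (x - x0))) by ring;
          rewrite Hsg2; ring).
    rewrite H0 in Hmvt.
    nra.
Qed.

Lemma gronwall_zero (lo hi : Rbar) (E dE K : R -> R) :
  (forall t, in_interval lo hi t -> is_derive E t (dE t)) ->
  (forall t, in_interval lo hi t -> continuity_pt K t) ->
  (forall t, in_interval lo hi t -> 0 <= E t) ->
  (forall t, in_interval lo hi t -> Rabs (dE t) <= K t * E t) ->
  forall x0, in_interval lo hi x0 -> E x0 = 0 ->
  forall x, in_interval lo hi x -> E x = 0.
Proof.
  intros HE HK Hpos Hle x0 Hx0 H0 x Hx.
  assert (Hseg : forall t, Rmin x0 x <= t <= Rmax x0 x -> in_interval lo hi t).
  { intros t Ht. unfold Rmin, Rmax in Ht. destruct Rle_dec.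
    - now apply (in_interval_between lo hi x0 x).
    - now apply (in_interval_between lo hi x x0). }
  destruct (continuity_ab_maj K (Rmin x0 x) (Rmax x0 x)) as [m [Hm _]].
  - apply Rmin_Rmax.
  - intros t Ht. now apply HK, Hseg.
  - apply (gronwall_segment E dE (K m) x0 x); auto.
    intros t Ht. eapply Rle_trans; [now apply Hle, Hseg |].
    apply Rmult_le_compat_r; auto.
Qed.

Lemma is_derive_sqr_Rmin0 (y : R) :
  is_derive (fun z => Rsqr (Rmin z 0)) y (2 * Rmin y 0).
Proof.
  apply is_derive_Reals. intros eps Heps. exists (mkposreal eps Heps).
  intros h Hh0 Hh. simpl in Hh.
  assert (Hrem : 0 <= Rsqr (Rmin (y + h) 0) - Rsqr (Rmin y 0) - 2 * Rmin y 0 * h <= h * h)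
    by (unfold Rsqr, Rmin; destruct (Rle_dec (y + h) 0), (Rle_dec y 0); split; nra).
  replace ((Rsqr (Rmin (y + h) 0) - Rsqr (Rmin y 0)) / h - 2 * Rmin y 0)
    with ((Rsqr (Rmin (y + h) 0) - Rsqr (Rmin y 0) - 2 * Rmin y 0 * h) / h)
    by (field; exact Hh0).
  apply Rle_lt_trans with (Rabs h); [| exact Hh].
  unfold Rdiv. rewrite Rabs_mult, Rabs_inv, (Rabs_pos_eq _ (proj1 Hrem)).
  assert (Habs : 0 < Rabs h) by now apply Rabs_pos_lt.
  apply Rmult_le_reg_r with (Rabs h); [exact Habs |].
  rewrite Rmult_assoc, Rinv_l, Rmult_1_r by lra.
  rewrite <- Rabs_mult, Rabs_pos_eq by nra. lra.
Qed.

Lemma Rabs_drift_le (v a c E Q Z : R) :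
  Z = c * v * E + a * Q -> 0 <= E -> Rabs c <= 2 -> Rabs Q <= 6 * E ->
  Rabs Z <= (2 * Rabs v + 6 * Rabs a) * E.
Proof.
  intros -> HE Hc HQ.
  eapply Rle_trans; [apply Rabs_triang |].
  rewrite !Rabs_mult, (Rabs_pos_eq E HE).
  pose proof (Rabs_pos v). pose proof (Rabs_pos a). pose proof (Rabs_pos c).
  assert (Rabs c * Rabs v * E <= 2 * Rabs v * E)
    by (apply Rmult_le_compat_r; nra).
  assert (Rabs a * Rabs Q <= Rabs a * (6 * E))
    by (apply Rmult_le_compat_l; auto).
  lra.
Qed.

Definition rhs_r (v a r s : R) : R := - v * r - s * a / 2 + a * Rabs r / 2.
Definition rhs_s (v a r s : R) : R := - v * s - r * a.

Lemma solution_gronwall v lo hi (a r s E dE : R -> R) :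
  is_solution v lo hi a r s ->
  (forall t, in_interval lo hi t -> is_derive E t (dE t)) ->
  (forall t, in_interval lo hi t -> 0 <= E t) ->
  (forall t, in_interval lo hi t ->
     Rabs (dE t) <= (2 * Rabs v + 6 * Rabs (a t)) * E t) ->
  forall x0, in_interval lo hi x0 -> E x0 = 0 ->
  forall x, in_interval lo hi x -> E x = 0.
Proof.
  intros Hsol HE Hpos Hle.
  apply (gronwall_zero lo hi E dE (fun t => 2 * Rabs v + 6 * Rabs (a t)));
    [exact HE | | exact Hpos | exact Hle].
  intros t Ht. destruct (Hsol t Ht) as [Ha _].
  apply continuity_pt_plus; [apply continuity_pt_const; now intros ? ? |].
  apply continuity_pt_scal, (continuity_pt_comp a Rabs).
  - exact (is_derive_continuity_pt _ _ _ Ha).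
  - apply Rcontinuity_abs.
Qed.

Lemma is_solution_mirror v lo hi (a r s : R -> R) :
  is_solution v lo hi a r s ->
  is_solution v lo hi (fun t => - a t) (fun t => - r t) s.
Proof.
  intros Hsol t Ht. destruct (Hsol t Ht) as (Ha & Hr & Hs).
  split; [| split].
  - now apply (is_derive_opp a).
  - rewrite Rabs_Ropp.
    replace (- v * - r t - s t * - a t / 2 + - a t * Rabs (r t) / 2)
      with (- (- v * r t - s t * a t / 2 + a t * Rabs (r t) / 2)) by field.
    now apply (is_derive_opp r).
  - now replace (- v * s t - - r t * - a t) with (- v * s t - r t * a t) by ring.
Qed.

Lemma invariant_mirror v (S : R -> R -> R -> Prop) :
  invariant v S -> invariant v (fun a r s => S (- a) (- r) s).
Proof.
  intros HS lo hi a r s Hsol.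
  exact (HS lo hi _ _ s (is_solution_mirror v lo hi a r s Hsol)).
Qed.

Lemma invariant_iff v (S S' : R -> R -> R -> Prop) :
  (forall a r s, S a r s <-> S' a r s) -> invariant v S -> invariant v S'.
Proof.
  intros Hiff HS lo hi a r s Hsol x0 Hx0 H0 x Hx.
  apply Hiff. apply Hiff in H0. exact (HS lo hi a r s Hsol x0 Hx0 H0 x Hx).
Qed.

Lemma invariant_or v (S T : R -> R -> R -> Prop) :
  invariant v S -> invariant v T -> invariant v (fun a r s => S a r s \/ T a r s).
Proof.
  intros HS HT lo hi a r s Hsol x0 Hx0 [H0 | H0] x Hx.
  - left. exact (HS lo hi a r s Hsol x0 Hx0 H0 x Hx).
  - right. exact (HT lo hi a r s Hsol x0 Hx0 H0 x Hx).
Qed.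

Definition ray (k a r s : R) : Prop := 0 <= r /\ s = k * r.

Lemma ray_slope_cases k : k * k = k + 2 -> k = 2 \/ k = -1.
Proof.
  intros hk. assert (Hprod : (k - 2) * (k + 1) = 0) by nra.
  destruct (Rmult_integral _ _ Hprod); [left | right]; lra.
Qed.

Lemma ray_energy_derivative_bound (v a r s k : R) :
  k * k = k + 2 ->
  Rabs (2 * (s - k * r) * (rhs_s v a r s - k * rhs_r v a r s)
        + 2 * Rmin r 0 * rhs_r v a r s)
  <= (2 * Rabs v + 6 * Rabs a) * (Rsqr (s - k * r) + Rsqr (Rmin r 0)).
Proof.
  intros hk. pose proof (ray_slope_cases k hk) as Hk.
  assert (HE : 0 <= Rsqr (s - k * r) + Rsqr (Rmin r 0))
    by (pose proof (Rle_0_sqr (s - k * r)); pose proof (Rle_0_sqr (Rmin r 0)); lra).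
  unfold rhs_r, rhs_s in *.
  destruct (Rle_or_lt 0 r) as [Hr | Hr].
  - rewrite (Rmin_right r 0) in * by lra. rewrite (Rabs_pos_eq r) by lra.
    apply (Rabs_drift_le _ _ (-2) _ (k * Rsqr (s - k * r))); auto.
    + destruct Hk; subst; unfold Rsqr; field.
    + rewrite Rabs_left; lra.
    + pose proof (Rle_0_sqr (s - k * r)).
      destruct Hk; subst k; apply Rabs_le; unfold Rsqr in *; split; nra.
  - rewrite (Rmin_left r 0) in * by lra. rewrite (Rabs_left r) by lra.
    apply (Rabs_drift_le _ _ (-2) _
             (k * Rsqr (s - k * r) + (k * k + k - 3) * r * (s - k * r) - (k + 1) * Rsqr r));
      auto.
    + unfold Rsqr; field.
    + rewrite Rabs_left; lra.
    + pose proof (Rle_0_sqr (s - k * r + r)). pose proof (Rle_0_sqr (s - k * r - r)).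
      destruct Hk; subst k; apply Rabs_le; unfold Rsqr in *; split; nra.
Qed.

Lemma invariant_ray v k : k * k = k + 2 -> invariant v (ray k).
Proof.
  intros hk lo hi a r s Hsol x0 Hx0 [Hr0 Hs0] x Hx.
  assert (Henergy : forall t, in_interval lo hi t ->
            Rsqr (s t - k * r t) + Rsqr (Rmin (r t) 0) = 0).
  { intros t Ht.
    refine (solution_gronwall v lo hi a r s
              (fun u => Rsqr (s u - k * r u) + Rsqr (Rmin (r u) 0))
              (fun u => 2 * (s u - k * r u)
                          * (rhs_s v (a u) (r u) (s u) - k * rhs_r v (a u) (r u) (s u))
                        + 2 * Rmin (r u) 0 * rhs_r v (a u) (r u) (s u))
              Hsol _ _ _ x0 Hx0 _ t Ht).
    - intros u Hu. destruct (Hsol u Hu) as (_ & Hr & Hs).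
      match goal with |- is_derive _ _ (2 * ?w * ?dw + 2 * ?m * ?dr) =>
        replace (2 * w * dw + 2 * m * dr) with (dw * (2 * w) + dr * (2 * m)) by ring end.
      apply (is_derive_plus (fun t => Rsqr (s t - k * r t)) (fun t => Rsqr (Rmin (r t) 0))).
      + apply (is_derive_comp Rsqr (fun t => s t - k * r t)).
        * auto_derive; [exact I | ring].
        * apply (is_derive_minus s (fun t => k * r t)); [exact Hs | now apply is_derive_scal].
      + apply (is_derive_comp (fun y => Rsqr (Rmin y 0)) r);
          [apply is_derive_sqr_Rmin0 | exact Hr].
    - intros u _. pose proof (Rle_0_sqr (s u - k * r u)).
      pose proof (Rle_0_sqr (Rmin (r u) 0)). lra.
    - intros u _. now apply ray_energy_derivative_bound.
    - rewrite Hs0, (Rmin_right (r x0) 0) by lra. unfold Rsqr; ring. }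
  destruct (Rplus_sqr_eq_0 _ _ (Henergy x Hx)) as [Hline Hmin].
  split; [| lra].
  unfold Rmin in Hmin. destruct Rle_dec; lra.
Qed.

Lemma invariant_open_ray v k :
  k * k = k + 2 -> invariant v (fun a r s => r > 0 /\ s = k * r).
Proof.
  intros hk lo hi a r s Hsol x0 Hx0 [Hr0 Hs0] x Hx.
  assert (Hray : forall t, in_interval lo hi t -> ray k (a t) (r t) (s t))
    by (intros t Ht; apply (invariant_ray v k hk lo hi a r s Hsol x0 Hx0);
        [split; lra | exact Ht]).
  destruct (Hray x Hx) as [[Hpos | Hzero] Hsx]; [easy | exfalso].
  assert (r x0 = 0); [| lra].
  refine (solution_gronwall v lo hi a r s r (fun t => rhs_r v (a t) (r t) (s t))
            Hsol _ _ _ x Hx (eq_sym Hzero) x0 Hx0).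
  - intros t Ht. apply (Hsol t Ht).
  - intros t Ht. apply (Hray t Ht).
  - intros t Ht. destruct (Hray t Ht) as [Hr Hs]. unfold rhs_r.
    rewrite (Rabs_pos_eq (r t)), Hs by exact Hr.
    apply (Rabs_drift_le _ _ (-1) _ ((1 - k) / 2 * r t)); [field | exact Hr | |].
    + rewrite Rabs_left; lra.
    + destruct (ray_slope_cases k hk); subst k; apply Rabs_le; split; lra.
Qed.

Definition wedge (p1 q1 p2 q2 a r s : R) : Prop :=
  0 <= p1 * r + q1 * s /\ 0 <= p2 * r + q2 * s.

Lemma invariant_wedge v p1 q1 p2 q2 (T : R -> R -> R -> Prop) :
  invariant v T ->
  (forall a r s, T a r s -> wedge p1 q1 p2 q2 a r s) ->
  (forall a r s, wedge p1 q1 p2 q2 a r s ->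
     p1 * r + q1 * s = 0 \/ p2 * r + q2 * s = 0 -> T a r s) ->
  invariant v (wedge p1 q1 p2 q2).
Proof.
  intros HT Hsub Hbd lo hi a r s Hsol x0 Hx0 H0 x Hx.
  set (phi := fun t => Rmin (p1 * r t + q1 * s t) (p2 * r t + q2 * s t)).
  assert (Hphi : forall t, wedge p1 q1 p2 q2 (a t) (r t) (s t) <-> 0 <= phi t).
  { intros t. unfold wedge, phi. split.
    - intros [H1 H2]. now apply Rmin_glb.
    - intros H. split; eapply Rle_trans; [exact H | apply Rmin_l | exact H | apply Rmin_r]. }
  apply Hphi. destruct (Rle_or_lt 0 (phi x)) as [Hin | Hout]; [exact Hin | exfalso].
  destruct (interval_zero_crossing phi lo hi x0 x) as [y [Hy Hphiy]];
    [| exact Hx0 | exact Hx | now apply Hphi | exact Hout |].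
  - intros t Ht. destruct (Hsol t Ht) as (_ & Hr & Hs).
    apply continuity_pt_Rmin; eapply is_derive_continuity_pt.
    + apply (is_derive_plus (fun u => p1 * r u) (fun u => q1 * s u));
        apply is_derive_scal; eassumption.
    + apply (is_derive_plus (fun u => p2 * r u) (fun u => q2 * s u));
        apply is_derive_scal; eassumption.
  - assert (HTy : T (a y) (r y) (s y)).
    { apply Hbd; [apply Hphi; lra |].
      unfold phi, Rmin in Hphiy. destruct Rle_dec; [left | right]; exact Hphiy. }
    pose proof (HT lo hi a r s Hsol y Hy HTy x Hx) as HTx.
    apply Hsub, Hphi in HTx. lra.
Qed.

Lemma invariant_Iset1 v : invariant v Iset1.
Proof. apply (invariant_open_ray v 2). lra. Qed.

Lemma invariant_Iset2 v : invariant v Iset2.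
Proof.
  apply (invariant_iff v (fun a r s => r > 0 /\ s = -1 * r)).
  - intros a r s. unfold Iset2. split; intros [? ?]; split; lra.
  - apply invariant_open_ray. lra.
Qed.

Lemma invariant_Iset3 v : invariant v Iset3.
Proof.
  apply (invariant_iff v (fun a r s => Iset2 (- a) (- r) s)).
  - intros a r s. unfold Iset2, Iset3. split; intros [? ?]; split; lra.
  - apply invariant_mirror, invariant_Iset2.
Qed.

Lemma invariant_Iset4 v : invariant v Iset4.
Proof.
  apply (invariant_iff v (fun a r s => Iset1 (- a) (- r) s)).
  - intros a r s. unfold Iset1, Iset4. split; intros [? ?]; split; lra.
  - apply invariant_mirror, invariant_Iset1.
Qed.

Lemma invariant_Rreg1 v : invariant v Rreg1.
Proof.
  apply (invariant_iff v (wedge 2 1 (-2) 1)).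
  { intros a r s. unfold wedge, Rreg1. split; intros [? ?]; split; lra. }
  apply (invariant_wedge v _ _ _ _ (fun a r s => ray 2 (- a) (- r) s \/ ray 2 a r s)).
  - apply invariant_or; [apply (invariant_mirror v (ray 2)) |]; apply invariant_ray; lra.
  - intros a r s [[? ?] | [? ?]]; split; lra.
  - intros a r s [? ?] [? | ?]; [left | right]; split; lra.
Qed.

Lemma invariant_Rreg2 v : invariant v Rreg2.
Proof.
  apply (invariant_iff v (wedge 2 (-1) 1 1)).
  { intros a r s. unfold wedge, Rreg2. split; intros [? ?]; split; lra. }
  apply (invariant_wedge v _ _ _ _ (fun a r s => ray 2 a r s \/ ray (-1) a r s)).
  - apply invariant_or; apply invariant_ray; lra.
  - intros a r s [[? ?] | [? ?]]; split; lra.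
  - intros a r s [? ?] [? | ?]; [left | right]; split; lra.
Qed.

Lemma invariant_Rreg3 v : invariant v Rreg3.
Proof.
  apply (invariant_iff v (wedge (-1) (-1) 1 (-1))).
  { intros a r s. unfold wedge, Rreg3. split; intros [? ?]; split; lra. }
  apply (invariant_wedge v _ _ _ _ (fun a r s => ray (-1) a r s \/ ray (-1) (- a) (- r) s)).
  - apply invariant_or; [| apply (invariant_mirror v (ray (-1)))]; apply invariant_ray; lra.
  - intros a r s [[? ?] | [? ?]]; split; lra.
  - intros a r s [? ?] [? | ?]; [left | right]; split; lra.
Qed.

Lemma invariant_Rreg4 v : invariant v Rreg4.
Proof.
  apply (invariant_iff v (fun a r s => Rreg2 (- a) (- r) s)).
  - intros a r s. unfold Rreg2, Rreg4. split; intros [? ?]; split; lra.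
  - apply invariant_mirror, invariant_Rreg2.
Qed.

Theorem proposition1 (v : R) :
  invariant v Iset1 /\ invariant v Iset2 /\ invariant v Iset3 /\ invariant v Iset4 /\
  invariant v Rreg1 /\ invariant v Rreg2 /\ invariant v Rreg3 /\ invariant v Rreg4.
Proof.
  exact (conj (invariant_Iset1 v) (conj (invariant_Iset2 v)
         (conj (invariant_Iset3 v) (conj (invariant_Iset4 v)
         (conj (invariant_Rreg1 v) (conj (invariant_Rreg2 v)
         (conj (invariant_Rreg3 v) (invariant_Rreg4 v)))))))).
Qed.
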